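(* Let $\alpha\in(0,1)$, $\delta>0$, $\epsilon>0$, and let $\lambda$ satisfy $0<\lambda<\alpha\,v_{\min}/s_{\max}$. Let $(\bar y,\bar C)$ be an optimal solution of the LP. Then for every task $T_{i,j}\in\mathcal T$, $$\bar C_{i,j}\ge(1-\alpha)\,\tau_{t^\alpha_{i,j}},$$ where $t^\alpha_{i,j}=\min\{\ell:\sum_{t=0}^\ell\sum_{s\in\mathcal V}\bar y_{i,j,s,t}|I_t|/p_{i,j,s}\ge\alpha\}$.
   Context: Problem MR. Jobs $\mathcal J=\{1,\dots,n\}$, processors $\mathcal P=\{1,\dots,m\}$. Job $j$ has weight $w_j>0$, release date $r_j\ge0$, and a nonempty set of Map tasks and a nonempty set of Reduce tasks, preassigned to processors with at most one task of each job per processor; $T_{i,j}$ is the task of job $j$ on processor $i$, with work $v_{i,j}\ge0$; $\mathcal T,\mathcal M,\mathcal R$ are the sets of all, Map, Reduce tasks. Running at speed $s$ uses power $s^\beta$ ($\beta>1$ fixed); $E>0$ is the energy budget. Notation: $w_{\min},w_{\max}$ min/max weights, $r_{\max}=\max_j r_j$, $v_{\max}=\max v_{i,j}$, $v_{\min}=\min\{v_{i,j}:v_{i,j}>0\}$, $t_{\max}=\frac{w_{\max}}{w_{\min}}\big(nr_{\max}+n(n+1)(|\mathcal T|v_{\max}^\beta/E)^{1/(\beta-1)}\big)$, $s_L=v_{\min}/t_{\max}$, $s_U=(E/v_{\min})^{1/(\beta-1)}$, $k=\lceil\log_{1+\epsilon}(s_U/s_L)\rceil$, $\mathcal V=\{s_L(1+\epsilon)^\ell:0\le\ell\le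 k\}$, $s_{\max}=s_L(1+\epsilon)^k$. LP: let $u$ be the least integer with $\lambda(1+\delta)^{u-1}\ge t_{\max}$, $\tau_0=0$, $\tau_t=\lambda(1+\delta)^{t-1}$ ($1\le t\le u+1$), $I_t=(\tau_t,\tau_{t+1}]$ of length $|I_t|$, $p_{i,j,s}=v_{i,j}/s$. Variables $y_{i,j,s,t},C_{i,j},C_j\ge0$. Minimize $\sum_jw_jC_j$ s.t. (1) $\sum_s\sum_{t=0}^u y_{i,j,s,t}|I_t|/p_{i,j,s}=1$ for all tasks; (2) $\sum_{j}\sum_s y_{i,j,s,t}\le1$ for all $i,t$; (3) $C_{i,j}\ge\frac12\sum_s y_{i,j,s,0}|I_0|(\frac1{p_{i,j,s}}+1)+\sum_{t=1}^u\sum_s(\frac{y_{i,j,s,t}|I_t|}{p_{i,j,s}}\tau_t+\frac12y_{i,j,s,t}|I_t|)$; (4) $C_j\ge C_{i,j}$; (5) $\sum_{T_{i,j}}\sum_s\sum_t y_{i,j,s,t}|I_t|s^\beta\le E$; (6) for $T_{i,j}\in\mathcal M$, $T_{i',j}\in\mathcal R$, $0\le\ell\le u$: $\sum_{t=0}^\ell\sum_s\frac{y_{i,j,s,t}|I_t|}{p_{i,j,s}}\ge\sum_{t=0}^\ell\sum_s\frac{y_{i',j,s,t}|I_t|}{p_{i',j,s}}$; (7) $y_{i,j,s,t}=0$ whenever $\tau_t<r_j$. *)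

From HB Require Import structures.
From mathcomp Require Import all_boot all_order all_algebra.
From mathcomp Require Import reals exp.
Unset Printing Implicit Defensive.
Import Order.TTheory GRing.Theory Num.Theory.
Local Open Scope ring_scope.

Section MR.
Variable R : realType.
(* n jobs ('I_n), m processors ('I_m) *)
Variables (n m : nat).
Variables (w r : 'I_n -> R).
(* isM i j : job j has a Map task on processor i; isR i j : a Reduce task. *)
Variables (isM isR : 'I_m -> 'I_n -> bool).
(* v i j : work of task T_{i,j} *)
Variable v : 'I_m -> 'I_n -> R.
Variables (beta E eps : R).

Definition isTask (i : 'I_m) (j : 'I_n) : bool := isM i j || isR i j.

Definition ntasks : nat := #|[set ij : 'I_m * 'I_n | isTask ij.1 ij.2]|.

Definition wmax : R := \big[Num.max/0]_(j < n) w j.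
Definition wmin : R := \big[Num.min/wmax]_(j < n) w j.
Definition rmax : R := \big[Num.max/0]_(j < n) r j.
Definition vmax : R :=
  \big[Num.max/0]_(ij : 'I_m * 'I_n | isTask ij.1 ij.2) v ij.1 ij.2.
Definition vmin : R :=
  \big[Num.min/vmax]_(ij : 'I_m * 'I_n | isTask ij.1 ij.2 && (0 < v ij.1 ij.2))
     v ij.1 ij.2.

Definition tmax : R :=
  wmax / wmin * (n%:R * rmax
     + n%:R * (n.+1)%:R * powR (ntasks%:R * powR vmax beta / E) (1 / (beta - 1))).

Definition sL : R := vmin / tmax.
Definition sU : R := powR (E / vmin) (1 / (beta - 1)).

Definition kk : int := Num.ceil (ln (sU / sL) / ln (1 + eps)).

(* V = { sL (1+eps)^l : 0 <= l <= k }, indexed by l : 'I_nV *)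
Definition nV : nat := if (0 <= kk)%R then (absz kk).+1 else 0%N.
Definition speed (l : 'I_nV) : R := sL * (1 + eps) ^+ l.
Definition smax : R := sL * (1 + eps) ^ kk.

Variables (lam delta : R) (u : nat).

Definition tau (t : nat) : R :=
  if t is t'.+1 then lam * (1 + delta) ^+ t' else 0.
(* |I_t| with I_t = (tau_t, tau_{t+1}] *)
Definition lenI (t : nat) : R := tau t.+1 - tau t.

Definition is_u : Prop :=
  tmax <= lam * (1 + delta) ^ (u%:Z - 1) /\
  (forall u' : int, u' < u%:Z -> lam * (1 + delta) ^ (u' - 1) < tmax).

Definition p (i : 'I_m) (j : 'I_n) (l : 'I_nV) : R := v i j / speed l.

Definition yvar := 'I_m -> 'I_n -> 'I_nV -> 'I_u.+1 -> R.

Definition frac (y : yvar) i j (t : 'I_u.+1) : R :=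
  \sum_(l < nV) y i j l t * lenI t / p i j l.

Definition cum (y : yvar) i j (k : nat) : R :=
  \sum_(t < u.+1 | (t <= k)%N) frac y i j t.

Definition feasible (y : yvar) (Ci : 'I_m -> 'I_n -> R) (C : 'I_n -> R) : Prop :=
  (forall i j l t, 0 <= y i j l t) /\
      (forall i j, 0 <= Ci i j) /\
      (forall j, 0 <= C j) /\
      (forall i j, isTask i j -> \sum_(t < u.+1) frac y i j t = 1) /\
      (forall i (t : 'I_u.+1),
          \sum_(j < n | isTask i j) \sum_(l < nV) y i j l t <= 1) /\
      (forall i j, isTask i j ->
          1 / 2 * (\sum_(l < nV) y i j l ord0 * lenI 0 * (1 / p i j l + 1))
          + \sum_(t < u.+1 | (1 <= t)%N) \sum_(l < nV)
               (y i j l t * lenI t / p i j l * tau t + 1 / 2 * (y i j l t * lenI t))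
          <= Ci i j) /\
      (forall i j, isTask i j -> Ci i j <= C j) /\
      (\sum_(ij : 'I_m * 'I_n | isTask ij.1 ij.2) \sum_(l < nV) \sum_(t < u.+1)
          y ij.1 ij.2 l t * lenI t * powR (speed l) beta <= E) /\
      (forall i i' j (k : 'I_u.+1), isM i j -> isR i' j ->
          cum y i' j k <= cum y i j k) /\
      (forall i j l (t : 'I_u.+1), isTask i j -> tau t < r j -> y i j l t = 0).

Definition objective (C : 'I_n -> R) : R := \sum_(j < n) w j * C j.

Definition optimal y Ci C : Prop :=
  feasible y Ci C /\
  forall y' Ci' C', feasible y' Ci' C' -> objective C <= objective C'.

End MR.

From Pilot Require Import Defs.
From HB Require Import structures.
From mathcomp Require Import all_boot all_order all_algebra.
From mathcomp Require Import reals exp.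
Import Order.TTheory GRing.Theory Num.Theory.
Set Implicit Arguments.
Unset Strict Implicit.
Unset Printing Implicit Defensive.

Local Open Scope ring_scope.

(* The LP charges the fraction [frac t] of a task processed in [I_t] at least
   [tau t] in constraint (3). Past step [t^alpha - 1] less than [alpha] of the
   task is done, so more than [1 - alpha] of it lies in intervals starting at
   or after [tau (t^alpha)], and [tau] is nondecreasing. *)

Lemma ler_sum_subpred (R : numDomainType) (I : finType) (P Q : pred I)
    (G : I -> R) :
  subpred Q P -> (forall t, P t -> 0 <= G t) ->
  \sum_(t | Q t) G t <= \sum_(t | P t) G t.
Proof.
move=> sQP G_ge0; rewrite [leRHS]big_mkcond [leLHS]big_mkcond /=.
apply: ler_sum => t _; have [/sQP -> //|_] := boolP (Q t).
by case: (P t) (G_ge0 t) => // ->.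
Qed.

Lemma ler_scale_sum_weighted (R : numDomainType) (I : finType) (P : pred I)
    (F T : I -> R) (c : R) :
  (forall t, P t -> 0 <= F t) -> (forall t, P t -> c <= T t) ->
  c * \sum_(t | P t) F t <= \sum_(t | P t) F t * T t.
Proof.
move=> F_ge0 cT; rewrite mulr_sumr; apply: ler_sum => t Pt.
by rewrite mulrC ler_wpM2l ?F_ge0 ?cT.
Qed.

Section TimeGrid.
Variables (R : realType) (lam delta : R).
Hypotheses (lam_ge0 : 0 <= lam) (delta_ge0 : 0 <= delta).

Lemma tau_le (a b : nat) : (a <= b)%N -> tau R lam delta a <= tau R lam delta b.
Proof.
case: a b => [|a] [|b] //= leab; first by rewrite mulr_ge0 ?exprn_ge0 ?addr_ge0.
by rewrite ler_wpM2l // ler_weXn2l // lerDl.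
Qed.

Lemma tau_ge0 (a : nat) : 0 <= tau R lam delta a.
Proof. exact: tau_le (leq0n a). Qed.

Lemma lenI_ge0 (t : nat) : 0 <= lenI R lam delta t.
Proof. by rewrite subr_ge0 tau_le. Qed.

End TimeGrid.

Section Schedule.
Variables (R : realType) (n m : nat) (w r : 'I_n -> R).
Variables (isM isR : 'I_m -> 'I_n -> bool) (v : 'I_m -> 'I_n -> R).
Variables (beta E eps lam delta : R) (u : nat).
Hypothesis v_gt0 : forall i j, isTask n m isM isR i j -> 0 < v i j.
Hypotheses (eps_gt0 : 0 < eps) (lam_gt0 : 0 < lam) (delta_ge0 : 0 <= delta).

Local Notation vmax := (Defs.vmax R n m isM isR v).
Local Notation vmin := (Defs.vmin R n m isM isR v).
Local Notation smax := (Defs.smax R n m w r isM isR v beta E eps).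
Local Notation sL := (Defs.sL R n m w r isM isR v beta E).
Local Notation tau := (Defs.tau R lam delta).
Local Notation lenI := (Defs.lenI R lam delta).
Local Notation p := (Defs.p R n m w r isM isR v beta E eps).
Local Notation frac := (Defs.frac R n m w r isM isR v beta E eps lam delta u).
Local Notation cum := (Defs.cum R n m w r isM isR v beta E eps lam delta u).
Local Notation feasible := (Defs.feasible R n m w r isM isR v beta E eps lam delta u).

Lemma vmax_ge0 : 0 <= vmax.
Proof.
apply: (big_ind (fun x => 0 <= x)) => // [x1 x2 x1_ge0 _|ij /v_gt0 /ltW //].
by rewrite le_max x1_ge0.
Qed.

Lemma vmin_ge0 : 0 <= vmin.
Proof.
apply: (big_ind (fun x => 0 <= x)) => [|x1 x2 ? ?|ij /andP[_ /ltW] //].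
  exact: vmax_ge0.
by rewrite le_min; apply/andP.
Qed.

(* Positivity of the speed grid is not assumed: it follows from the bound on [lam]. *)
Lemma sL_gt0_of_lam_bound (alpha : R) :
  0 < alpha -> lam < alpha * vmin / smax -> 0 < sL.
Proof.
move=> alpha_gt0 lam_lt; rewrite ltNge; apply/negP => sL_le0.
have smax_le0 : smax <= 0 by rewrite mulr_le0_ge0 // ltW // exprz_gt0 // addr_gt0.
have : alpha * vmin / smax <= 0.
  by rewrite mulr_ge0_le0 ?invr_le0 // mulr_ge0 ?vmin_ge0 // ltW.
by rewrite leNgt (lt_trans lam_gt0 lam_lt).
Qed.

Hypothesis sL_gt0 : 0 < sL.

Lemma p_gt0 i j l : isTask n m isM isR i j -> 0 < p i j l.
Proof. by move=> ij; rewrite divr_gt0 ?v_gt0 // mulr_gt0 // exprn_gt0 // addr_gt0. Qed.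

Variables (y : yvar R n m w r isM isR v beta E eps u).
Variables (Ci : 'I_m -> 'I_n -> R) (C : 'I_n -> R).
Hypothesis feas : feasible y Ci C.
Variables (i : 'I_m) (j : 'I_n).
Hypothesis task_ij : isTask n m isM isR i j.

Lemma y_ge0 l t : 0 <= y i j l t.
Proof. by case: feas. Qed.

Lemma y_lenI_ge0 l (t : 'I_u.+1) : 0 <= y i j l t * lenI t.
Proof. by rewrite mulr_ge0 ?y_ge0 // lenI_ge0 // ltW. Qed.

Lemma inv_p_ge0 l : 0 <= 1 / p i j l.
Proof. by rewrite mul1r invr_ge0 ltW // p_gt0. Qed.

Lemma frac_ge0 t : 0 <= frac y i j t.
Proof.
by apply: sumr_ge0 => l _; rewrite mulr_ge0 ?y_lenI_ge0 // invr_ge0 ltW ?p_gt0.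
Qed.

Lemma sum_frac_after (s : nat) :
  \sum_(t < u.+1 | (s < t)%N) frac y i j t = 1 - cum y i j s.
Proof.
have [_ [_ [_ [sum_frac1 _]]]] := feas.
rewrite -(sum_frac1 i j task_ij) /Defs.cum.
rewrite [X in _ = X - _](bigID (fun t : 'I_u.+1 => (t <= s)%N)) /=.
by rewrite addrC addrK; apply: eq_bigl => t; rewrite ltnNge.
Qed.

(* Constraint (3) with its nonnegative [1/2]-terms dropped. *)
Lemma weighted_start_le_Ci :
  \sum_(t < u.+1 | (0 < t)%N) frac y i j t * tau t <= Ci i j.
Proof.
have [_ [_ [_ [_ [_ [Ci_ge _]]]]]] := feas.
apply: le_trans (Ci_ge i j task_ij); rewrite -[leLHS]add0r; apply: lerD.
  rewrite mulr_ge0 ?mul1r ?invr_ge0 ?ler0n // sumr_ge0 // => l _.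
  by rewrite mulr_ge0 ?(y_lenI_ge0 l ord0) // addr_ge0 ?inv_p_ge0.
apply: ler_sum => t _; rewrite mulr_suml; apply: ler_sum => l _.
by rewrite lerDl mulr_ge0 ?y_lenI_ge0 // divr_ge0.
Qed.

Lemma tail_start_le_Ci (s : nat) :
  (1 - cum y i j s) * tau s.+1 <= Ci i j.
Proof.
apply: le_trans weighted_start_le_Ci.
apply: (@le_trans _ _ (\sum_(t < u.+1 | (s < t)%N) frac y i j t * tau t)).
  rewrite -sum_frac_after mulrC; apply: ler_scale_sum_weighted => t st.
    exact: frac_ge0.
  by apply: tau_le => //; exact: ltW.
apply: ler_sum_subpred => [t|t _]; first exact: leq_trans (ltn0Sn s).
by rewrite mulr_ge0 ?frac_ge0 ?tau_ge0 // ltW.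
Qed.

End Schedule.

Theorem lemma4 (R : realType) (n m : nat) (w r : 'I_n -> R)
  (isM isR : 'I_m -> 'I_n -> bool) (v : 'I_m -> 'I_n -> R)
  (beta E eps delta lam alpha : R) (u : nat)
  (hw : forall j, 0 < w j) (hr : forall j, 0 <= r j)
  (hMR : forall i j, ~~ (isM i j && isR i j))
  (hMne : forall j, exists i, isM i j) (hRne : forall j, exists i, isR i j)
  (hv : forall i j, isTask n m isM isR i j -> 0 < v i j)
  (hbeta : 1 < beta) (hE : 0 < E)
  (halpha : 0 < alpha < 1) (hdelta : 0 < delta) (heps : 0 < eps)
  (hlam : 0 < lam < alpha * vmin R n m isM isR v / smax R n m w r isM isR v beta E eps)
  (hu : is_u R n m w r isM isR v beta E lam delta u)
  (y : yvar R n m w r isM isR v beta E eps u)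
  (Ci : 'I_m -> 'I_n -> R) (C : 'I_n -> R)
  (hopt : optimal R n m w r isM isR v beta E eps lam delta u y Ci C) :
  forall i j, isTask n m isM isR i j ->
  forall ta : nat,
    alpha <= cum R n m w r isM isR v beta E eps lam delta u y i j ta ->
    (forall l : nat, (l < ta)%N ->
        cum R n m w r isM isR v beta E eps lam delta u y i j l < alpha) ->
    (1 - alpha) * tau R lam delta ta <= Ci i j.
Proof.
move=> i j task_ij [_ _|s _ before_ta].
  by rewrite mulr0; have [[_ [Ci_ge0 _]] _] := hopt.
have [alpha_gt0 _] := andP halpha; have [lam_gt0 lam_lt] := andP hlam.
have sL_gt0 := sL_gt0_of_lam_bound hv heps lam_gt0 alpha_gt0 lam_lt.
apply: le_trans (tail_start_le_Ci hv heps lam_gt0 (ltW hdelta) sL_gt0 hopt.1 task_ij s).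
have tau_ta_ge0 := tau_ge0 (ltW lam_gt0) (ltW hdelta) s.+1.
by rewrite ler_wpM2r // lerD2l lerN2; apply/ltW/before_ta.
Qed.
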